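(* Let $\{Q(C;\alpha)\}$ be a filtration of simplicial complexes on a finite set $C$ and fix $\alpha\ge0$. Let $G\subseteq Q(C;\alpha)$ be a graph that spans $Q(C;\alpha)$ such that the inclusion induces an isomorphism $H_1(G;\mathbb{Z}_2)\to H_1(Q(C;\alpha);\mathbb{Z}_2)$. Let $(b_i,d_i)$, $i=1,\dots,m$, be all dots (counted with multiplicity) of the persistence diagram $\mathrm{PD}\{Q(C;\alpha)\}$ with $b_i\le\alpha<d_i$. Then the total length of edges of $G$ is at least the total length of edges of $\mathrm{MST}(C;\alpha)$ plus $2\sum_{i=1}^m b_i$.
   Context: A filtration on a finite set $C$: nested finite simplicial complexes $Q(C;\alpha)$, $\alpha\ge0$, with vertex set $C$, each simplex entering at a minimal scale; final complex connected. Edge length $|e|=2\min\{\alpha:e\subset Q(C;\alpha)\}$. $\mathrm{MST}(C)$ is a minimum total length spanning tree on $C$ using filtration edges; $\mathrm{MST}(C;\alpha)$ removes all open edges of length $>2\alpha$. A graph $G$ spans a complex $Q$ on $C$ if $G$ has vertex set $C$, every edge of $G$ is in $Q$, and the inclusion induces a bijection on connected components. $\mathrm{PD}\{Q(C;\alpha)\}$ is the 1-dimensional persistence diagram (with $\mathbb{Z}_2$ coefficients) of the filtration: the multiset of (birth, death) pairs of $H_1$ classes, where a class is born at $\alpha_i$ if not in the image from any earlier scale and dies at $\alpha_j$ when its image merges into the image from scales earlier than its birth. *)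

From HB Require Import structures.
From mathcomp Require Import all_boot all_order all_algebra.
Set Implicit Arguments. Unset Strict Implicit. Unset Printing Implicit Defensive.
Import Order.TTheory GRing.Theory Num.Theory.

(* Chains with Z_2 coefficients are functions {set C} -> F_2
   (only the values on simplices of the relevant complex matter). *)
Section Chains.
Variable C : finType.

Notation chain := {ffun {set C} -> ('F_2)^o}.
Local Open Scope ring_scope.

Definition delta (s : {set C}) : chain := [ffun t => if t == s then 1 else 0].

Definition bd_simplex (s : {set C}) : chain :=
  if (1 < #|s|)%N then \sum_(v in s) delta (s :\ v) else 0.

Definition bd : 'End(chain) :=
  linfun (fun c : chain => \sum_(s : {set C}) c s *: bd_simplex s).

Definition chains (X : {set {set C}}) (k : nat) : {vspace chain} :=
  <<[seq delta s | s <- filter (fun s : {set C} => #|s| == k.+1) (enum X)]>>%VS.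

(* 1-cycles and 1-boundaries of X ; H_1(X;Z_2) = Z1 X / B1 X *)
Definition Z1 (X : {set {set C}}) : {vspace chain} := (chains X 1 :&: lker bd)%VS.
Definition B1 (X : {set {set C}}) : {vspace chain} := (bd @: chains X 2)%VS.

(* rank of the map H_1(X) -> H_1(Y) induced by an inclusion X \subset Y:
   dim of the image (Z1 X + B1 Y)/B1 Y *)
Definition rk (X Y : {set {set C}}) : nat := (\dim (Z1 X + B1 Y) - \dim (B1 Y))%N.

(* the map H_1(X) -> H_1(Y), [z] |-> [z], induced by X \subset Y is
   injective and surjective *)
Definition H1_incl_iso (X Y : {set {set C}}) : bool :=
  (Z1 X :&: B1 Y <= B1 X)%VS && (Z1 Y <= Z1 X + B1 Y)%VS.

Definition adj (X : {set {set C}}) : rel C := fun x y => [set x; y] \in X.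
Definition is_edge (e : {set C}) := #|e| == 2.
Definition edges (X : {set {set C}}) : {set {set C}} := [set e in X | is_edge e].
Definition connected (X : {set {set C}}) := [forall x, forall y, connect (adj X) x y].

Definition graph_cpx (E : {set {set C}}) : {set {set C}} :=
  [set [set x] | x : C] :|: E.

(* G = (C, E) spans the complex X: edges of G are edges of X, and the map
   on connected components induced by inclusion is a bijection (it is
   automatically well defined and surjective since the vertex sets agree;
   injectivity = vertices connected in X are connected in G). *)
Definition spans (E X : {set {set C}}) : bool :=
  (E \subset edges X) &&
  [forall x, forall y, connect (adj X) x y ==> connect (adj E) x y].

Definition is_spanning_tree (T : {set {set C}}) : bool :=
  [forall e in T, is_edge e] && connected T &&
  [forall e in T, ~~ connected (T :\ e)].
End Chains.

Section Filtration.
Variables (R : realFieldType) (C : finType).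
Local Open Scope ring_scope.

(* A filtration is given by its final complex K (a set of nonempty simplices)
   and the entry scale ent s >= 0 of every simplex s \in K, so that
   Q(C;alpha) = [set s in K | ent s <= alpha]. *)
Definition is_filtration (K : {set {set C}}) (ent : {set C} -> R) : Prop :=
  [/\ set0 \notin K,
      (forall x : C, [set x] \in K /\ ent [set x] = 0),
      (forall s, s \in K -> 0 <= ent s),
      (forall s t : {set C}, s \in K -> t \subset s -> t != set0 -> t \in K /\ ent t <= ent s)
    & connected K].

Definition Qle (K : {set {set C}}) (ent : {set C} -> R) (a : R) :=
  [set s in K | ent s <= a].
Definition Qlt (K : {set {set C}}) (ent : {set C} -> R) (a : R) :=
  [set s in K | ent s < a].

Definition elen (ent : {set C} -> R) (e : {set C}) : R := 2%:R * ent e.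
Definition total_len (ent : {set C} -> R) (E : {set {set C}}) : R :=
  \sum_(e in E) elen ent e.

Definition is_MST (K : {set {set C}}) (ent : {set C} -> R) (T : {set {set C}}) : Prop :=
  T \subset edges K /\ is_spanning_tree T /\
  forall T' : {set {set C}}, T' \subset edges K -> is_spanning_tree T' ->
             total_len ent T <= total_len ent T'.

Definition MST_at (ent : {set C} -> R) (T : {set {set C}}) (a : R) : {set {set C}} :=
  [set e in T | elen ent e <= 2%:R * a].

(* the scales at which simplices enter (all possible births / finite deaths) *)
Definition crit (K : {set {set C}}) (ent : {set C} -> R) : seq R := undup [seq ent s | s <- enum K].

(* Multiplicity in the 1-dim persistence diagram of the dot (b, d),
   d = Some d' finite or None = infinity, via the rank function:
   #(classes born at b alive in Y) = rk Q_b Y - rk Q_{<b} Y,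
   mult (b,d) = #(born at b, alive in Q_{<d}) - #(born at b, alive in Q_d).
   All nat subtractions here are of a smaller rank from a larger one. *)
Definition pd_mult (K : {set {set C}}) (ent : {set C} -> R) (b : R) (d : option R) : nat :=
  match d with
  | Some d' => (rk (Qle K ent b) (Qlt K ent d') - rk (Qlt K ent b) (Qlt K ent d'))
             - (rk (Qle K ent b) (Qle K ent d') - rk (Qlt K ent b) (Qle K ent d'))
  | None => rk (Qle K ent b) K - rk (Qlt K ent b) K
  end.

Definition pd_birth_sum (K : {set {set C}}) (ent : {set C} -> R) (a : R) : R :=
  \sum_(b <- crit K ent | b <= a)
     ( (\sum_(d <- crit K ent | a < d) (pd_mult K ent b (Some d))%:R * b)
       + (pd_mult K ent b None)%:R * b ).
End Filtration.

(* Over Z_2, rank-nullity splits the number of edges of a graph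
   into the dimension of its cycle space and that of its boundary space.  For
   G, the cycle space surjects onto H_1(Q(C;alpha)), and for every t its
   cycles made of edges of length < 2t inject into the classes of
   H_1(Q(C;<t)) surviving in H_1(Q(C;alpha)); by the cut property of minimum
   spanning trees, the boundaries of those edges are boundaries of MST edges of
   length < 2t.  Telescoping over the critical values, the dots (b, d) with
   b <= alpha < d are exactly the classes born at b and alive at alpha.  So for
   every threshold t, the half-lengths of the edges of G contain at least as
   many values >= t as the half-lengths of MST(C;alpha) together with the
   births b_i, and such a domination of upper tails bounds the sums. *)

From HB Require Import structures.
From mathcomp Require Import all_boot all_order all_algebra.
From mathcomp Require Import zify.
Import Order.TTheory GRing.Theory Num.Theory.
Set Implicit Arguments. Unset Strict Implicit. Unset Printing Implicit Defensive.
Local Open Scope ring_scope.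

Section Chains.
Variable C : finType.
Local Notation chain := {ffun {set C} -> ('F_2)^o}.
Local Notation delta := (@delta C).

Lemma F2_addxx (x : ('F_2)^o) : x + x = 0.
Proof. by case: x => [[|[|n]]] // ?; apply/val_inj. Qed.

Lemma F2_neq0 (x : ('F_2)^o) : x != 0 -> x = 1.
Proof. by case: x => [[|[|n]]] //= ? ?; apply/val_inj. Qed.

Lemma F2_scaleE (k x : ('F_2)^o) : k *: x = k * x.
Proof. by []. Qed.

Lemma chain_addxx (c : chain) : c + c = 0.
Proof. by apply/ffunP => s; rewrite !ffunE F2_addxx. Qed.

Definition bd_fun (c : chain) : chain := \sum_(s : {set C}) c s *: bd_simplex s.

Lemma bd_fun_is_linear : linear bd_fun.
Proof.
move=> k u v; rewrite /bd_fun scaler_sumr -big_split /=; apply: eq_bigr => s _.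
by rewrite !ffunE scalerDl scalerA.
Qed.
HB.instance Definition _ :=
  GRing.isLinear.Build _ chain chain _ bd_fun bd_fun_is_linear.

Lemma bdE (c : chain) : bd C c = \sum_(s : {set C}) c s *: bd_simplex s.
Proof. exact: (lfunE bd_fun). Qed.

Lemma deltaE s t : delta s t = if t == s then 1 else 0.
Proof. by rewrite ffunE. Qed.

Lemma bd_delta s : bd C (delta s) = bd_simplex s.
Proof.
rewrite bdE (bigD1 s) //= big1 => [|t /negbTE ts]; last by rewrite deltaE ts scale0r.
by rewrite deltaE eqxx scale1r addr0.
Qed.

Lemma bd_edge x y : x != y -> bd_simplex [set x; y] = delta [set x] + delta [set y].
Proof.
move=> nxy; rewrite /bd_simplex cards2 nxy big_setU1 ?inE 1?eq_sym //=; last first.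
  by rewrite eq_sym.
rewrite (big_pred1 y) => [|z]; last by rewrite inE.
have drop (v w : C) : v != w -> [set v; w] :\ v = [set w].
  move=> nvw; apply/setP => z; rewrite !inE.
  by case: (z =P v) => [->|_]; rewrite ?(negbTE nvw).
by rewrite drop // setUC drop 1?eq_sym // addrC.
Qed.

Definition chains_on (S : {set {set C}}) : {vspace chain} :=
  <<[seq delta s | s <- enum S]>>%VS.

Lemma chain_sum_delta (c : chain) : c = \sum_(s : {set C}) c s *: delta s.
Proof.
apply/ffunP => t; rewrite sum_ffunE (bigD1 t) //= big1 => [|s /negbTE ts].
  by rewrite !ffunE eqxx addr0 F2_scaleE mulr1.
by rewrite !ffunE eq_sym ts F2_scaleE mulr0.
Qed.

Definition coef (s : {set C}) (c : chain) : ('F_2)^o := c s.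

Lemma coef_is_linear s : linear (coef s).
Proof. by move=> k u v; rewrite /coef !ffunE. Qed.
HB.instance Definition _ s :=
  GRing.isLinear.Build _ chain ('F_2)^o _ (coef s) (coef_is_linear s).

Lemma chains_onP (c : chain) (S : {set {set C}}) :
  reflect (forall s, c s != 0 -> s \in S) (c \in chains_on S).
Proof.
apply: (iffP idP) => [hc s|h].
  apply: contraR => sS; apply/eqP.
  have : (chains_on S <= lker (linfun (coef s)))%VS.
    apply/span_subvP => v /mapP [t]; rewrite mem_enum => tS ->.
    rewrite memv_ker lfunE /= /coef deltaE.
    by case: (s =P t) => [st|//]; rewrite st tS in sS.
  by move/subvP/(_ c hc); rewrite memv_ker lfunE => /eqP.
rewrite (chain_sum_delta c); apply: memv_suml => s _.
have [->|/h sS] := eqVneq (c s) 0; first by rewrite scale0r mem0v.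
by apply/memvZ/memv_span/map_f; rewrite mem_enum.
Qed.

Lemma chains_on0 (c : chain) S s : c \in chains_on S -> s \notin S -> c s = 0.
Proof. by move=> /chains_onP h; apply: contraNeq; apply: h. Qed.

Lemma delta_chains_on s (S : {set {set C}}) : s \in S -> delta s \in chains_on S.
Proof. by move=> sS; apply/memv_span/map_f; rewrite mem_enum. Qed.

Lemma chains_onS (S S' : {set {set C}}) :
  S \subset S' -> (chains_on S <= chains_on S')%VS.
Proof.
move=> /subsetP sub; apply/subvP => c /chains_onP h.
by apply/chains_onP => s /h /sub.
Qed.

Lemma dim_chains_on (S : {set {set C}}) : \dim (chains_on S) = #|S|.
Proof.
suff /eqP : free [seq delta s | s <- enum S] by rewrite size_map -cardE.
apply/freeP => k hk i; have si : (i < size (enum S))%N by rewrite -cardE.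
have nthE j : (j < size (enum S))%N ->
    [seq delta s | s <- enum S]`_j = delta (nth set0 (enum S) j).
  by move=> ?; rewrite (nth_map set0).
have := congr1 (coef (nth set0 (enum S) i)) hk; rewrite raddf_sum raddf0.
rewrite (bigD1 i) //= big1 => [|j nji].
  by rewrite linearZ /= nthE // /coef deltaE eqxx F2_scaleE mulr1 addr0.
rewrite linearZ /= nthE -?cardE // /coef deltaE nth_uniq ?enum_uniq -?cardE //.
by rewrite (inj_eq val_inj) eq_sym (negbTE nji) F2_scaleE mulr0.
Qed.

Lemma chains_chains_on (X : {set {set C}}) k :
  chains X k = chains_on [set s in X | #|s| == k.+1].
Proof.
apply: eq_span => v; apply/mapP/mapP => -[s hs ->]; exists s => //.
  by move: hs; rewrite mem_filter !mem_enum inE andbC.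
by move: hs; rewrite mem_enum inE mem_filter mem_enum andbC.
Qed.

Definition bd_on (S : {set {set C}}) : {vspace chain} := (bd C @: chains_on S)%VS.
Definition cycles_on (S : {set {set C}}) : {vspace chain} :=
  (chains_on S :&: lker (bd C))%VS.

Lemma card_cycles_bd_on (S : {set {set C}}) :
  #|S| = (\dim (cycles_on S) + \dim (bd_on S))%N.
Proof. by rewrite limg_ker_dim dim_chains_on. Qed.

Lemma dim_bd_on (S : {set {set C}}) : (\dim (bd_on S) <= #|S|)%N.
Proof. by rewrite (card_cycles_bd_on S) leq_addl. Qed.

Lemma bd_delta_on s (S : {set {set C}}) : s \in S -> bd C (delta s) \in bd_on S.
Proof. by move=> sS; apply/memv_img/delta_chains_on. Qed.

Lemma bd_on_sub (S : {set {set C}}) (U : {vspace chain}) :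
  {in S, forall s, bd C (delta s) \in U} -> (bd_on S <= U)%VS.
Proof.
move=> h; rewrite /bd_on limg_span; apply/span_subvP => v /mapP [w /mapP [s]].
by rewrite mem_enum => sS -> ->; apply: h.
Qed.

End Chains.

Section Connectivity.
Variable C : finType.
Local Notation chain := {ffun {set C} -> ('F_2)^o}.
Local Notation delta := (@delta C).

Lemma connect_bd_on (S : {set {set C}}) x y : connect (adj S) x y ->
  delta [set x] + delta [set y] \in bd_on S.
Proof.
case/connectP => p; elim: p x => [|z p IH] x /=.
  by move=> _ ->; rewrite chain_addxx mem0v.
case/andP => xz /IH {}IH /IH.
have -> : delta [set x] + delta [set y] =
    (delta [set x] + delta [set z]) + (delta [set z] + delta [set y]).
  by rewrite addrA -(addrA (delta [set x])) chain_addxx addr0.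
apply: memvD; have [<-|nxz] := eqVneq x z; first by rewrite chain_addxx mem0v.
by rewrite -bd_edge // -bd_delta; apply: bd_delta_on.
Qed.

Definition vertex_sum (A : {set C}) (c : chain) : ('F_2)^o := \sum_(z in A) c [set z].

Lemma vertex_sum_is_linear A : linear (vertex_sum A).
Proof.
move=> k u v; rewrite /vertex_sum scaler_sumr -big_split.
by apply: eq_bigr => z _; rewrite !ffunE.
Qed.
HB.instance Definition _ A :=
  GRing.isLinear.Build _ chain ('F_2)^o _ (vertex_sum A) (vertex_sum_is_linear A).

Lemma vertex_sum_delta A v : vertex_sum A (delta [set v]) = (v \in A)%:R.
Proof.
rewrite /vertex_sum (eq_bigr (fun z => (z == v)%:R)) => [|z _]; last first.
  by rewrite deltaE (inj_eq set1_inj); case: eqP.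
have [vA|vA] := boolP (v \in A).
  by rewrite (bigD1 v) //= eqxx big1 ?addr0 // => z /andP [_ /negbTE ->].
by apply: big1 => z zA; have /negbTE -> : z != v by apply: contraNneq vA => <-.
Qed.

Lemma connected_of_bd_on (S : {set {set C}}) : {in S, forall e, is_edge e} ->
  (forall x y, delta [set x] + delta [set y] \in bd_on S) -> connected S.
Proof.
move=> edgeS hbd; apply/forallP => x; apply/forallP => y; apply/idPn => nxy.
(* Summing coefficients over the component of x kills the boundary of every
   edge but not delta x + delta y. *)
pose A := [set z | connect (adj S) x z].
have : (bd_on S <= lker (linfun (vertex_sum A)))%VS.
  apply: bd_on_sub => s sS; have /cards2P [u [w [nuw esw]]] := edgeS s sS.
  rewrite {}esw in sS *.
  have uw : (u \in A) = (w \in A).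
    rewrite !inE; apply/idP/idP => h; apply: connect_trans h (connect1 _).
      exact: sS.
    by rewrite /adj setUC.
  by rewrite bd_delta bd_edge // memv_ker lfunE /= linearD /= !vertex_sum_delta uw
    F2_addxx.
move/subvP/(_ _ (hbd x y)); rewrite memv_ker lfunE /= linearD /= !vertex_sum_delta.
by rewrite !inE connect0 (negbTE nxy) addr0 oner_eq0.
Qed.

Lemma connected_bd_onP (S : {set {set C}}) : {in S, forall e, is_edge e} ->
  reflect (forall x y, delta [set x] + delta [set y] \in bd_on S) (connected S).
Proof.
move=> edgeS; apply: (iffP idP); last exact: connected_of_bd_on.
by move=> /forallP connS x y; apply/connect_bd_on/(forallP (connS x)).
Qed.

Lemma connected_bd_onS (S S' : {set {set C}}) : {in S', forall e, is_edge e} ->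
  (bd_on S <= bd_on S')%VS -> connected S -> connected S'.
Proof.
move=> edgeS' sub /forallP connS; apply/connected_bd_onP => // x y.
by apply/(subvP sub)/connect_bd_on/(forallP (connS x)).
Qed.

Lemma cycles_on_eq0P (S : {set {set C}}) :
  reflect (forall c, c \in chains_on S -> bd C c = 0 -> c = 0) (cycles_on S == 0%VS).
Proof.
rewrite -subv0; apply: (iffP subvP) => [h c cS bdc|h c /memv_capP [cS]].
  by apply/eqP; rewrite -memv0; apply: h; rewrite memv_cap cS memv_ker bdc eqxx.
by rewrite memv_ker memv0 => /eqP /(h c cS) ->.
Qed.

Lemma chains_onD1 (S : {set {set C}}) f (p : chain) :
  p \in chains_on S -> p f != 0 -> p + delta f \in chains_on (S :\ f).
Proof.
move=> /chains_onP pS pf; apply/chains_onP => s; rewrite ffunE deltaE !inE.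
have [->|nsf] := eqVneq s f; first by rewrite (F2_neq0 pf) F2_addxx eqxx.
by rewrite addr0 => /pS ->.
Qed.

Lemma spanning_treeP (T : {set {set C}}) :
  reflect [/\ {in T, forall e, is_edge e}, connected T & cycles_on T == 0%VS]
          (is_spanning_tree T).
Proof.
apply: (iffP idP) => [|[edgeT connT /cycles_on_eq0P acycT]].
  case/andP => /andP [/forall_inP edgeT connT] /forall_inP minT; split=> //.
  apply/cycles_on_eq0P => c cT bdc; apply/ffunP => f; rewrite ffunE.
  apply/eqP; apply: contraT => cf; have fT := chains_onP _ _ cT f cf.
  case/negP: (minT f fT); apply: (connected_bd_onS _ _ connT).
    by move=> s /setD1P [_ /edgeT].
  apply: bd_on_sub => s sT; have [->|nsf] := eqVneq s f.
    have -> : bd C (delta f) = bd C (c + delta f) by rewrite linearD /= bdc add0r.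
    exact/memv_img/chains_onD1.
  by apply: bd_delta_on; rewrite !inE nsf.
rewrite /is_spanning_tree connT (introT forall_inP edgeT) /=.
apply/forall_inP => g gT; apply/negP => connTg.
have /cards2P [u [w [nuw guw]]] := edgeT g gT.
have /memv_imgP [c cTg bdc] : delta [set u] + delta [set w] \in bd_on (T :\ g).
  by apply/connected_bd_onP => // s /setD1P [_ /edgeT].
have cgT : c + delta g \in chains_on T.
  by apply: memvD; [apply: (subvP (chains_onS (subsetDl T [set g]))) | apply: delta_chains_on].
have bdcg : bd C (c + delta g) = 0.
  by rewrite linearD /= -bdc guw bd_delta bd_edge // chain_addxx.
have := congr1 (fun c : chain => c g) (acycT _ cgT bdcg).
by rewrite !ffunE (chains_on0 cTg) ?setD11 // eqxx add0r => /eqP; rewrite oner_eq0.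
Qed.

Lemma exchange_spanning_tree (T : {set {set C}}) e f (p : chain) :
  is_spanning_tree T -> is_edge e -> e \notin T ->
  p \in chains_on T -> bd C p = bd C (delta e) -> p f != 0 ->
  is_spanning_tree (e |: (T :\ f)).
Proof.
move=> /spanning_treeP [edgeT connT /cycles_on_eq0P acycT] edge_e eT pT bdp pf.
have nef : e != f by apply: contraNneq eT => ->; apply: (chains_onP _ _ pT).
have fT' : f \notin e |: (T :\ f) by rewrite !inE eqxx eq_sym (negbTE nef).
have T'e : (e |: (T :\ f)) :\ e = T :\ f.
  by rewrite setU1K // !inE negb_and eT orbT.
have subT : (chains_on (T :\ f) <= chains_on T)%VS by apply/chains_onS/subsetDl.
apply/spanning_treeP; split.
- by move=> s /setU1P [-> //|/setD1P [_ /edgeT]].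
- apply: connected_bd_onS connT; first by move=> s /setU1P [-> //|/setD1P [_ /edgeT]].
  apply: bd_on_sub => s sT; have [->|nsf] := eqVneq s f; last first.
    by apply: bd_delta_on; rewrite !inE nsf sT orbT.
  have -> : bd C (delta f) = bd C (p + delta f + delta e).
    by rewrite !linearD /= bdp addrC addrA chain_addxx add0r.
  apply/memv_img/memvD; last exact/delta_chains_on/setU11.
  exact/(subvP (chains_onS (subsetUr _ _)))/chains_onD1.
apply/cycles_on_eq0P => z zT' bdz; have zf := chains_on0 zT' fT'.
have [ze|ze] := eqVneq (z e) 0.
  apply: acycT bdz; apply/chains_onP => s zs; have := chains_onP _ _ zT' s zs.
  by case/setU1P => [se|/setD1P []//]; rewrite se ze eqxx in zs.
have zeT : z + delta e \in chains_on T by rewrite -T'e in subT; exact/(subvP subT)/chains_onD1.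
have bdq : bd C (p + (z + delta e)) = 0.
  by rewrite !linearD /= bdz bdp add0r chain_addxx.
have := congr1 (fun c : chain => c f) (acycT _ (memvD pT zeT) bdq).
rewrite eq_sym in nef; rewrite !ffunE zf (negbTE nef) (F2_neq0 pf) !addr0 => /eqP.
by rewrite oner_eq0.
Qed.

End Connectivity.

Section MinimumSpanningTree.
Variables (R : realFieldType) (C : finType) (K : {set {set C}}) (ent : {set C} -> R).

Lemma total_lenE S : total_len ent S = 2%:R * \sum_(e in S) ent e.
Proof. by rewrite /total_len /elen -mulr_sumr. Qed.

Lemma total_len_exchange (T : {set {set C}}) e f : f \in T -> e \notin T ->
  total_len ent (e |: (T :\ f)) + elen ent f = total_len ent T + elen ent e.
Proof.
move=> fT eT; rewrite /total_len (big_setD1 f fT) big_setU1 /=; last first.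
  by rewrite !inE negb_and eT orbT.
by rewrite addrC -!addrA (addrC (elen ent f)) addrA.
Qed.

Lemma MST_cut (T : {set {set C}}) t e : is_MST K ent T ->
  e \in edges K -> ent e < t -> bd C (delta e) \in bd_on [set g in T | ent g < t].
Proof.
move=> [TK [treeT minT]] /[dup] eKe; rewrite inE => /andP [eK edge_e] et.
have [eT|eT] := boolP (e \in T); first by apply: bd_delta_on; rewrite inE eT et.
have /spanning_treeP [edgeT connT _] := treeT.
have /cards2P [x [y [nxy exy]]] := edge_e.
have /memv_imgP [p pT bdp] : delta [set x] + delta [set y] \in bd_on T.
  exact/connected_bd_onP.
have {}bdp : bd C p = bd C (delta e) by rewrite -bdp exy bd_delta bd_edge.
have [f /andP [pf tf]|low_p] := pickP (fun f => (p f != 0) && (t <= ent f)).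
  have fT := chains_onP _ _ pT f pf.
  have T'K : e |: (T :\ f) \subset edges K.
    apply/subsetP => s /setU1P [-> //|/setD1P [_ /(subsetP TK)] //].
  have := minT _ T'K (exchange_spanning_tree treeT edge_e eT pT bdp pf).
  rewrite -(lerD2r (elen ent f)) total_len_exchange // lerD2l /elen.
  by rewrite ler_pM2l ?ltr0n // leNgt (lt_le_trans et tf).
rewrite -bdp; apply/memv_img/chains_onP => s ps; rewrite inE (chains_onP _ _ pT s ps).
by have := low_p s; rewrite /= ps /= ltNge => ->.
Qed.

End MinimumSpanningTree.

Section Rank.
Variable C : finType.
Local Notation chain := {ffun {set C} -> ('F_2)^o}.

Lemma chainsS (X Y : {set {set C}}) k : X \subset Y -> (chains X k <= chains Y k)%VS.
Proof.
move=> /subsetP sub; rewrite !chains_chains_on; apply/chains_onS/subsetP => s.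
by rewrite !inE => /andP [/sub -> ->].
Qed.

Lemma Z1S (X Y : {set {set C}}) : X \subset Y -> (Z1 X <= Z1 Y)%VS.
Proof. by move=> sub; apply/capvS/subvv/chainsS. Qed.

Lemma B1S (X Y : {set {set C}}) : X \subset Y -> (B1 X <= B1 Y)%VS.
Proof. by move=> sub; apply/limgS/chainsS. Qed.

Lemma rkSl (X X' Y : {set {set C}}) : X \subset X' -> (rk X Y <= rk X' Y)%N.
Proof. by move=> sub; rewrite leq_sub2r // dimvS // addvS // Z1S. Qed.

Lemma rk_gap_antitone (Xl Xb Y Y' : {set {set C}}) : Xl \subset Xb -> Y \subset Y' ->
  (rk Xb Y' - rk Xl Y' <= rk Xb Y - rk Xl Y)%N.
Proof.
move=> sX sY; rewrite /rk.
set U := Z1 Xb; set U' := Z1 Xl; set B := B1 Y; set B' := B1 Y'.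
(* As U' <= U, rk Xb Y - rk Xl Y = \dim U - \dim (U :&: (U' + B)), and the
   intersection only grows when B is replaced by B'. *)
have sU : (U' <= U)%VS by apply: Z1S.
have sB : (B <= B')%VS by apply: B1S.
have h1 := dimv_sum_cap U (U' + B); have h2 := dimv_sum_cap U (U' + B').
rewrite addvA (addv_idPl sU) in h1; rewrite addvA (addv_idPl sU) in h2.
have h3 : (\dim (U :&: (U' + B)) <= \dim (U :&: (U' + B')))%N.
  by apply/dimvS/capvS/addvS.
have h4 : (\dim B <= \dim (U' + B))%N by apply/dimvS/addvSr.
have h5 : (\dim B' <= \dim (U' + B'))%N by apply/dimvS/addvSr.
have h6 : (\dim (U' + B) <= \dim (U + B))%N by apply/dimvS/addvS.
have h7 : (\dim (U' + B') <= \dim (U + B'))%N by apply/dimvS/addvS.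
lia.
Qed.

Lemma rk_le_dim (Y : {set {set C}}) (U : {vspace chain}) :
  (Z1 Y <= U + B1 Y)%VS -> (rk Y Y <= \dim U)%N.
Proof.
move=> sub; have := dimv_sum_cap U (B1 Y).
have : (Z1 Y + B1 Y <= U + B1 Y)%VS by rewrite subv_add sub addvSr.
move/dimvS; rewrite /rk; lia.
Qed.

Lemma dim_le_rk (X Y : {set {set C}}) (U : {vspace chain}) :
  (U <= Z1 X)%VS -> (U :&: B1 Y = 0)%VS -> (\dim U <= rk X Y)%N.
Proof.
move=> sub cap0; have := dimv_sum_cap U (B1 Y); rewrite cap0 dimv0.
have /dimvS := addvS sub (subvv (B1 Y)); rewrite /rk; lia.
Qed.

Variable E : {set {set C}}.
Hypothesis edgeE : {in E, forall e, is_edge e}.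

Lemma graph_cpx_simplices k :
  [set s in graph_cpx E | #|s| == k.+2] = if k == 0%N then E else set0.
Proof.
apply/setP => s; rewrite !inE; have [sE|sE] := boolP (s \in E).
  by rewrite orbT (eqP (edgeE sE)); case: k => [|k]; rewrite ?inE ?sE.
rewrite orbF; case: (boolP (s \in [set [set x] | x : C])) => [/imsetP [x _ sx]|_].
  by rewrite sx cards1 -sx; case: k => [|k] /=; rewrite ?inE ?(negbTE sE).
by case: k => [|k]; rewrite ?inE ?(negbTE sE).
Qed.

Lemma Z1_graph_cpx : Z1 (graph_cpx E) = cycles_on E.
Proof. by rewrite /Z1 chains_chains_on (graph_cpx_simplices 0). Qed.

Lemma B1_graph_cpx : B1 (graph_cpx E) = 0%VS.
Proof.
rewrite /B1 chains_chains_on (graph_cpx_simplices 1) /= /chains_on.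
by rewrite enum_set0 span_nil limg0.
Qed.

End Rank.

Lemma has_min (d : Order.disp_t) (T : orderType d) (s : seq T) (P : pred T) :
  has P s -> exists2 c, (c \in s) && P c & {in s, forall y, P y -> (c <= y)%O}.
Proof.
move=> hP; have sorted_l := sort_sorted (@le_total _ T) [seq y <- s | P y].
have mem_l y : (y \in sort <=%O [seq y <- s | P y]) = (y \in s) && P y.
  by rewrite mem_sort mem_filter andbC.
case El: (sort _ _) sorted_l mem_l => [|c l] sorted_l mem_l.
  by move: hP; rewrite has_filter -size_eq0 -(size_sort <=%O) El.
exists c; first by rewrite -mem_l mem_head.
move=> y ys Py; have : y \in c :: l by rewrite mem_l ys.
rewrite inE => /predU1P [-> //|yl].
by move/(order_path_min le_trans)/allP: sorted_l; apply.
Qed.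

Lemma has_max (d : Order.disp_t) (T : orderType d) (s : seq T) :
  s != [::] -> exists2 c, c \in s & {in s, forall y, (y <= c)%O}.
Proof.
case: s => [//|x s] _; have [|c /andP [cs _] hc] := @has_min _ T^d (x :: s) predT.
  by rewrite has_predT.
by exists c => // y ys; apply: hc.
Qed.

Lemma count_predD1 (T : eqType) (s : seq T) (P : pred T) x : uniq s -> x \in s -> P x ->
  count P s = (count (fun y => P y && (y != x)) s).+1.
Proof.
move=> us xs Px; have /permP cnt := perm_to_rem xs.
rewrite !cnt /= Px eqxx andbF add0n add1n; congr (_.+1).
by apply: eq_in_count => y; rewrite mem_rem_uniq // inE => /andP [-> _]; rewrite andbT.
Qed.

(* A multiset [Y] of reals whose upper tails are never larger than those of a
   multiset [X] of nonnegative reals has a smaller sum: match the largest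
   element of [Y] with an element of [X] above it and induct. *)
Lemma ler_sum_count_ge (R : realDomainType) (X Y : seq R) :
  all (fun x => 0 <= x) X ->
  {in Y, forall t, count (fun y => (t <= y)%R) Y <= count (fun x => (t <= x)%R) X}%N ->
  \sum_(y <- Y) y <= \sum_(x <- X) x.
Proof.
move sizeY: (size Y) => n; elim: n X Y sizeY => [|n IH] X Y sizeY X_ge0 tails.
  by rewrite (size0nil sizeY) big_nil big_seq sumr_ge0 // => x /(allP X_ge0).
have [m mY m_max] : exists2 m, m \in Y & {in Y, forall y, y <= m}.
  by apply: has_max; apply: contra_eqN sizeY => /eqP ->.
have /permP count_Y := perm_to_rem mY.
have : (0 < count (fun x => (m <= x)%R) X)%N.
  by apply: leq_trans (tails m mY); rewrite count_Y /= lexx.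
rewrite -has_count => /hasP [x0 x0X mx0].
have /permP count_X := perm_to_rem x0X.
rewrite (perm_big _ (perm_to_rem mY)) (perm_big _ (perm_to_rem x0X)) !big_cons.
apply: lerD => //; apply: IH.
- by rewrite size_rem // sizeY.
- by apply/allP => x /mem_rem /(allP X_ge0).
move=> t /mem_rem tY; have := tails t tY.
by rewrite count_Y count_X /= (m_max _ tY) (le_trans (m_max _ tY) mx0) !add1n.
Qed.

Lemma count_ge_enum (T : finType) (R : realDomainType) (f : T -> R) (S : {set T}) t :
  (count (fun x => (t <= x)%R) [seq f e | e <- enum S] + #|[set e in S | (f e < t)%R]|
    = #|S|)%N.
Proof.
rewrite count_map [RHS]cardE -(count_predC (fun e => t <= f e)); congr (_ + _)%N.
rewrite -sum1_count big_enum_cond /= sum1_card cardsE.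
by apply: eq_card => e; rewrite !unfold_in /= ltNge.
Qed.

Section Persistence.
Variables (R : realFieldType) (C : finType) (K : {set {set C}}) (ent : {set C} -> R).
Local Notation crit := (crit K ent).
Local Notation Qle := (Qle K ent).
Local Notation Qlt := (Qlt K ent).

Lemma crit_uniq : uniq crit.
Proof. exact: undup_uniq. Qed.

Lemma mem_crit s : s \in K -> ent s \in crit.
Proof. by move=> sK; rewrite mem_undup; apply: map_f; rewrite mem_enum. Qed.

Lemma Qlt_sub_Qle x y : x <= y -> Qlt x \subset Qle y.
Proof.
by move=> xy; apply/subsetP => s; rewrite !inE => /andP [-> sx]; rewrite ltW ?(lt_le_trans sx).
Qed.

Lemma Qle_gap x y : x <= y -> {in crit, forall c, (x < c) && (c <= y) = false} ->
  Qle x = Qle y.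
Proof.
move=> xy gap; apply/setP => s; rewrite !inE; have [sK|//] := boolP (s \in K).
apply/idP/idP => /= [/le_trans ->//|sy]; rewrite leNgt.
by have := gap _ (mem_crit sK); rewrite sy andbT => ->.
Qed.

Lemma Qle_Qlt_gap x y : x < y -> {in crit, forall c, (x < c) && (c < y) = false} ->
  Qle x = Qlt y.
Proof.
move=> xy gap; apply/setP => s; rewrite !inE; have [sK|//] := boolP (s \in K).
apply/idP/idP => /= [/le_lt_trans ->//|sy]; rewrite leNgt.
by have := gap _ (mem_crit sK); rewrite sy andbT => ->.
Qed.

Lemma Qle_top y : {in crit, forall c, c <= y} -> Qle y = K.
Proof.
move=> top; apply/setP => s; rewrite !inE andb_idr // => sK.
exact/top/mem_crit.
Qed.

(* Between consecutive critical values the filtration does not change, so the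
   increments at the critical values telescope. *)
Lemma telescope_crit (V : zmodType) (F : {set {set C}} -> V) x y : x <= y ->
  \sum_(c <- crit | (x < c) && (c <= y)) (F (Qle c) - F (Qlt c)) = F (Qle y) - F (Qle x).
Proof.
set P := fun c => (x < c) && (c <= y).
move cnt: (count P crit) => n; elim: n x @P cnt => [|n IH] x P cnt xy.
  have gap : {in crit, forall c, (x < c) && (c <= y) = false}.
    move=> c ccrit; apply/negbTE; move: c ccrit; apply/hasPn.
    by rewrite has_count cnt.
  by rewrite big_hasC ?(Qle_gap xy gap) ?subrr // has_count cnt.
have [c0 /andP [c0crit /andP [xc0 c0y]] c0_min] : exists2 c0, (c0 \in crit) && P c0 &
    {in crit, forall c, P c -> c0 <= c}.
  by apply: has_min; rewrite has_count cnt.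
have next : {in crit, forall c, P c && (c != c0) = (c0 < c) && (c <= y)}.
  move=> c ccrit; rewrite /P; apply/idP/idP => [/andP [/andP [xc cy] nc]|/andP [c0c cy]].
    by rewrite cy andbT lt_neqAle eq_sym nc c0_min // /P xc cy.
  by rewrite (lt_trans xc0 c0c) cy (gt_eqF c0c).
rewrite -big_filter (bigD1_seq c0) ?filter_uniq ?crit_uniq ?mem_filter /P ?xc0 ?c0y //=.
rewrite big_filter_cond big_seq_cond (eq_bigl (fun c => (c \in crit) && ((c0 < c) && (c <= y)))).
  rewrite -big_seq_cond IH //; last first.
    apply/eq_add_S; rewrite -cnt [RHS](count_predD1 crit_uniq c0crit) /P ?xc0 ?c0y //.
    by congr _.+1; apply: eq_in_count => c /next.
  have -> : Qlt c0 = Qle x.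
    apply/esym/Qle_Qlt_gap => // c ccrit; apply/negbTE/negP => /andP [xc cc0].
    by have := c0_min c ccrit; rewrite /P xc (le_trans (ltW cc0) c0y) leNgt cc0 => /(_ isT).
  by rewrite addrC addrA subrK.
by move=> c; case: (boolP (c \in crit)) => //= /next.
Qed.

Definition born_alive (a b : R) : nat := (rk (Qle b) (Qle a) - rk (Qlt b) (Qle a))%N.

Lemma pd_mult_sum a b :
  \sum_(d <- crit | a < d) (pd_mult K ent b (Some d))%:R + (pd_mult K ent b None)%:R
    = (born_alive a b)%:R :> R.
Proof.
pose F Y : R := (rk (Qle b) Y)%:R - (rk (Qlt b) Y)%:R.
have gapE Y : (rk (Qle b) Y - rk (Qlt b) Y)%N%:R = F Y.
  by rewrite natrB // rkSl // Qlt_sub_Qle.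
have multE d : (pd_mult K ent b (Some d))%:R = F (Qlt d) - F (Qle d).
  by rewrite /pd_mult natrB ?rk_gap_antitone ?Qlt_sub_Qle // !gapE.
pose top := \big[Num.max/a]_(c <- crit) c.
have atop : a <= top by apply: bigmax_ge_id.
have le_top : {in crit, forall c, c <= top} by move=> c ccrit; apply: le_bigmax_seq.
have Ktop : Qle top = K by apply: Qle_top.
have -> : \sum_(d <- crit | a < d) (pd_mult K ent b (Some d))%:R
    = - \sum_(d <- crit | (a < d) && (d <= top)) (F (Qle d) - F (Qlt d)).
  rewrite -sumrN big_seq_cond [RHS]big_seq_cond.
  apply: eq_big => [d|d _]; last by rewrite multE [RHS]opprB.
  by case: (boolP (d \in crit)) => //= /le_top ->; rewrite andbT.
by rewrite telescope_crit // Ktop /born_alive /= gapE opprB subrK gapE.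
Qed.

Lemma pd_birth_sum_born_alive a :
  pd_birth_sum K ent a = \sum_(b <- crit | b <= a) (born_alive a b)%:R * b.
Proof.
by apply: eq_bigr => b _; rewrite -mulr_suml -mulrDl pd_mult_sum.
Qed.

Lemma sum_born_alive a t : t \in crit -> t <= a ->
  (\sum_(b <- crit | (t <= b <= a)%R) born_alive a b
    = rk (Qle a) (Qle a) - rk (Qlt t) (Qle a))%N.
Proof.
move=> tcrit ta; pose F Y : int := rk Y (Qle a).
have bornE b : (born_alive a b)%:R = F (Qle b) - F (Qlt b).
  by rewrite natz subzn // rkSl // Qlt_sub_Qle.
apply/eqP; rewrite -eqz_nat -subzn ?rkSl ?Qlt_sub_Qle // -natz natr_sum.
rewrite (eq_bigr _ (fun b _ => bornE b)) -big_filter (bigD1_seq t) ?filter_uniq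
  ?crit_uniq ?mem_filter ?lexx ?ta //= big_filter_cond.
rewrite (eq_bigl (fun b => (t < b) && (b <= a))) => [|b]; last first.
  by rewrite lt_neqAle eq_sym [LHS]andbC andbA.
by rewrite telescope_crit // addrC addrA subrK.
Qed.

End Persistence.

Section Main.
Variables (R : realFieldType) (C : finType) (K : {set {set C}}) (ent : {set C} -> R).
Variables (a : R) (E T : {set {set C}}).
Hypothesis spanE : spans E (Qle K ent a).
Hypothesis isoE : H1_incl_iso (graph_cpx E) (Qle K ent a).
Hypothesis MST_T : is_MST K ent T.

Local Notation crit := (crit K ent).
Local Notation Qa := (Qle K ent a).
Local Notation Qlt := (Qlt K ent).
Local Notation Ta := (MST_at ent T a).

Lemma spans_edge e : e \in E -> [/\ is_edge e, e \in K & ent e <= a].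
Proof. by case/andP: spanE => /subsetP sub _ /sub; rewrite !inE => /andP [/andP [-> ->] ->]. Qed.

Lemma edgeE : {in E, forall e, is_edge e}.
Proof. by move=> e /spans_edge []. Qed.

Lemma MST_at_edge e : e \in Ta -> [/\ e \in T, e \in edges K & ent e <= a].
Proof.
rewrite inE /elen => /andP [eT]; case: MST_T => /subsetP TK _.
by rewrite ler_pM2l ?ltr0n // => ea; split => //; apply: TK.
Qed.

Lemma MST_at_lt t : t <= a -> [set e in Ta | ent e < t] = [set e in T | ent e < t].
Proof.
move=> ta; apply/setP => e; rewrite !inE /elen ler_pM2l ?ltr0n //.
have [et|_] := boolP (ent e < t); last by rewrite !andbF.
by rewrite (le_trans (ltW et) ta) !andbT.
Qed.

Lemma card_MST_at_rk : (#|Ta| + rk Qa Qa <= #|E|)%N.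
Proof.
have acyclic_Ta : cycles_on Ta = 0%VS.
  have [_ [/spanning_treeP [_ _ /cycles_on_eq0P acyclic_T] _]] := MST_T.
  apply/eqP/cycles_on_eq0P => c cTa; apply/acyclic_T/(subvP (chains_onS _) _ cTa).
  by apply/subsetP => e /MST_at_edge [].
have bd_Ta : (bd_on Ta <= bd_on E)%VS.
  apply: bd_on_sub => e /MST_at_edge [_]; rewrite inE => /andP [eK /cards2P [x [y [nxy exy]]]] ea.
  have : connect (adj Qa) x y by apply: connect1; rewrite /adj -exy !inE eK ea.
  case/andP: spanE => _ /forallP /(_ x) /forallP /(_ y) /implyP connE /connE.
  by move/connect_bd_on; rewrite exy bd_delta bd_edge.
have rkQa : (rk Qa Qa <= \dim (cycles_on E))%N.
  by case/andP: isoE => _; rewrite (Z1_graph_cpx edgeE); apply: rk_le_dim.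
rewrite (card_cycles_bd_on E) (card_cycles_bd_on Ta) acyclic_Ta dimv0 addnC leq_add //.
exact: dimvS.
Qed.

Lemma card_E_lt t : t <= a ->
  (#|[set e in E | (ent e < t)%R]| <= #|[set e in Ta | (ent e < t)%R]| + rk (Qlt t) Qa)%N.
Proof.
move=> ta; set Et := [set e in E | ent e < t].
have EtE : Et \subset E by apply/subsetP => e; rewrite inE => /andP [].
rewrite (card_cycles_bd_on Et) addnC MST_at_lt // leq_add //.
  apply: leq_trans (dim_bd_on _); apply/dimvS/bd_on_sub => e.
  rewrite inE => /andP [/spans_edge [edge_e eK _] et].
  by apply: (MST_cut MST_T) => //; rewrite inE eK.
apply: dim_le_rk.
  apply: capvS (subvv _); rewrite chains_chains_on; apply/chains_onS/subsetP => e.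
  by rewrite !inE => /andP [/spans_edge [edge_e -> _] ->].
apply/eqP; rewrite -subv0 -(B1_graph_cpx edgeE).
apply: subv_trans (proj1 (andP isoE)); apply: capvS (subvv _).
by rewrite (Z1_graph_cpx edgeE); apply: capvS (chains_onS EtE) (subvv _).
Qed.

Definition births : seq R :=
  flatten [seq nseq (born_alive K ent a b) b | b <- crit & b <= a].

Lemma sum_births :
  \sum_(y <- births) y = \sum_(b <- crit | b <= a) (born_alive K ent a b)%:R * b.
Proof.
rewrite big_flatten big_map big_filter; apply: eq_bigr => b _.
by rewrite big_nseq iter_addr addr0 mulr_natl.
Qed.

Lemma mem_births y : y \in births -> y \in crit /\ y <= a.
Proof.
case/flattenP => s /mapP [b]; rewrite mem_filter => /andP [ba bcrit] ->.
by rewrite mem_nseq => /andP [_ /eqP ->].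
Qed.

Lemma count_births t : t \in crit -> t <= a ->
  count (fun y => t <= y) births = (rk Qa Qa - rk (Qlt t) Qa)%N.
Proof.
move=> tcrit ta; rewrite -sum_born_alive // count_flatten sumnE !big_map big_filter.
rewrite [RHS](eq_bigl (fun b => (b <= a) && (t <= b))) => [|b]; last by rewrite andbC.
rewrite [RHS]big_mkcondr; apply: eq_bigr => b _.
by rewrite count_nseq /=; case: (t <= b); rewrite ?mul1n ?mul0n.
Qed.

Lemma upper_tails_dominated t : t \in [seq ent e | e <- enum Ta] ++ births ->
  (count (fun y => (t <= y)%R) ([seq ent e | e <- enum Ta] ++ births)
    <= count (fun x => (t <= x)%R) [seq ent e | e <- enum E])%N.
Proof.
move=> tY; have [tcrit ta] : t \in crit /\ t <= a.
  move: tY; rewrite mem_cat => /orP [/mapP [e]|/mem_births //]; rewrite mem_enum.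
  by case/MST_at_edge => _; rewrite inE => /andP [eK _] ea ->; split; rewrite ?mem_crit.
rewrite count_cat count_births //.
have count_ge (S : {set {set C}}) : (count (fun x => (t <= x)%R) [seq ent e | e <- enum S]
    + #|[set e in S | (ent e < t)%R]| = #|S|)%N by exact: count_ge_enum.
have := count_ge E; have := count_ge Ta.
have := card_MST_at_rk; have := card_E_lt ta.
have : (#|[set e in Ta | (ent e < t)%R]| <= #|Ta|)%N.
  by apply/subset_leq_card/subsetP => e; rewrite inE => /andP [].
have : (rk (Qlt t) Qa <= rk Qa Qa)%N by apply/rkSl/Qlt_sub_Qle.
lia.
Qed.

End Main.

Theorem mainTheorem8 (R : realFieldType) (C : finType)
  (K : {set {set C}}) (ent : {set C} -> R)
  (hK : is_filtration K ent) (alpha : R) (halpha : 0 <= alpha)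
  (E : {set {set C}})
  (hspan : spans E (Qle K ent alpha))
  (hiso : H1_incl_iso (graph_cpx E) (Qle K ent alpha))
  (T : {set {set C}}) (hT : is_MST K ent T) :
  total_len ent (MST_at ent T alpha) + 2%:R * pd_birth_sum K ent alpha
    <= total_len ent E.
Proof.
have sum_enum S : \sum_(x <- [seq ent e | e <- enum S]) x = \sum_(e in S) ent e.
  by rewrite big_map big_enum.
rewrite !total_lenE -mulrDr ler_pM2l ?ltr0n // pd_birth_sum_born_alive.
rewrite -!sum_enum -sum_births -big_cat; apply: ler_sum_count_ge.
  apply/allP => x /mapP [e]; rewrite mem_enum => /(spans_edge hspan) [_ eK _] ->.
  by case: hK => _ _ ent_ge0 _ _; apply: ent_ge0.
exact: upper_tails_dominated.
Qed.
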